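(* Let $\delta_{\max}\approx0.453$ be the positive real root of $\delta^3+2\delta-1$ and define $\rho:[0,\delta_{\max}]\to\mathbb{R}$ by $\rho(\delta)=-\frac{2\delta^2+3}{2}+\frac{\sqrt{4\delta^2+4\delta+9}}{2}$. Then $\rho$ attains a maximum value $r_{\max}$ on $[0,\delta_{\max}]$ (numerically $r_{\max}\approx 0.0386$), and $r_{\max}\le r_{\mathrm{bif}}(-1)$.
   Context: $f_c(z)=z^2+c$, extended to $\widehat{\mathbb{C}}$ by $f_c(\infty)=\infty$. For $c\in\mathbb{C}$, $r\ge0$, $G_{c,r}$ is the semigroup under composition generated by $\{f_{c'}:|c'-c|\le r\}$. A minimal set of a polynomial semigroup $G$ is a minimal element, with respect to inclusion, of the family of non-empty compact $L\subset\widehat{\mathbb{C}}$ with $g(L)\subset L$ for all $g\in G$; it is planar if $\infty\notin L$. The bifurcation radius $r_{\mathrm{bif}}(c)$ is the supremum of those $r\ge0$ for which $G_{c,r}$ has a planar minimal set (equivalently the infimum of those $r\ge0$ for which $G_{c,r}$ has no planar minimal set); by prior work this value is attained and $G_{c,r}$ has a planar minimal set iff $r\le r_{\mathrm{bif}}(c)$. *)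

From Stdlib Require Import Reals List.
From Coquelicot Require Import Coquelicot.
Open Scope R_scope.

(* The Riemann sphere: [Some z] is the point z of C, [None] is infinity. *)
Definition Chat := option C.

(* Topology of the one-point compactification: U is open iff its finite part
   is open in C, and if it contains infinity it contains a neighbourhood
   {|z| > M} of infinity. *)
Definition open_hat (U : Chat -> Prop) : Prop :=
  open (fun z : C => U (Some z)) /\
  (U None -> exists M : R, forall z : C, M < Cmod z -> U (Some z)).

Definition compact_hat (L : Chat -> Prop) : Prop :=
  forall (I : Type) (U : I -> Chat -> Prop),
    (forall i, open_hat (U i)) ->
    (forall x, L x -> exists i, U i x) ->
    exists l : list I, forall x, L x -> exists i, In i l /\ U i x.

Definition fc (c : C) (w : Chat) : Chat :=
  match w with
  | Some z => Some (Cplus (Cmult z z) c)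
  | None => None
  end.

Inductive in_G (c : C) (r : R) : (Chat -> Chat) -> Prop :=
  | G_gen : forall c' : C, Cmod (Cminus c' c) <= r -> in_G c r (fc c')
  | G_comp : forall g h, in_G c r g -> in_G c r h ->
      in_G c r (fun w => g (h w)).

Definition invariant_compact (c : C) (r : R) (L : Chat -> Prop) : Prop :=
  (exists x, L x) /\ compact_hat L /\
  (forall g, in_G c r g -> forall x, L x -> L (g x)).

Definition minimal_set (c : C) (r : R) (L : Chat -> Prop) : Prop :=
  invariant_compact c r L /\
  (forall L', invariant_compact c r L' -> (forall x, L' x -> L x) ->
     forall x, L x -> L' x).

Definition planar_minimal_set (c : C) (r : R) (L : Chat -> Prop) : Prop :=
  minimal_set c r L /\ ~ L None.

Definition has_planar_minimal_set (c : C) (r : R) : Prop :=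
  exists L, planar_minimal_set c r L.

Definition r_bif (c : C) : Rbar :=
  Lub_Rbar (fun r => 0 <= r /\ has_planar_minimal_set c r).

Definition rho (d : R) : R :=
  - (2 * d ^ 2 + 3) / 2 + sqrt (4 * d ^ 2 + 4 * d + 9) / 2.

(* Take r = rho(a) > 0 and b = a^2 + r, so that r + 2b + b^2 = a.  For |c' + 1| <= r the map
   z^2 + c' sends the disc |z| <= a into |z + 1| <= b and the disc |z + 1| <= b into |z| <= a,
   so the union K of the two discs is a compact set invariant under G_{-1,r}.  Every point of K
   is mapped to 0 by the semigroup: from the second disc one step lands in the first, and inside
   the first disc two well-chosen steps decrease |z| by 2r (a convexity estimate).  Hence the
   closure of the orbit of 0 is a planar minimal set, and rho(a) <= r_bif(-1).  This applies to
   the maximiser of the continuous function rho on [0, dmax], because 1/10 <= dmax and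
   rho(1/10) > 0. *)

From Stdlib Require Import Reals List Lra Lia Classical ClassicalEpsilon.
From Coquelicot Require Import Coquelicot.
Open Scope R_scope.

Lemma sqrt2_lt_2 : sqrt 2 < 2.
Proof. pose proof (sqrt_pos 2); pose proof (sqrt_sqrt 2); nra. Qed.

Lemma Cmod_lt_of_coords (u : C) (d : R) :
  Rabs (fst u) < d -> Rabs (snd u) < d -> Cmod u < 2 * d.
Proof.
  intros H1 H2.
  assert (Hm : Rmax (Rabs (fst u)) (Rabs (snd u)) < d) by (apply Rmax_lub_lt; assumption).
  pose proof (Cmod_2Rmax u); pose proof sqrt2_lt_2; pose proof (Rabs_pos (fst u)).
  pose proof (Rmax_l (Rabs (fst u)) (Rabs (snd u))); nra.
Qed.

Lemma ball_Cmod (z w : C) (e : posreal) : ball z e w -> Cmod (w - z) < 2 * e.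
Proof. intros [H1 H2]; exact (Cmod_lt_of_coords (w - z) e H1 H2). Qed.

Lemma Cmod_sub_le (x y z : C) : Cmod (x - z) <= Cmod (x - y) + Cmod (y - z).
Proof. replace (x - z)%C with ((x - y) + (y - z))%C by ring; apply Cmod_triangle. Qed.

Lemma Cmod_sub_sym (x y : C) : Cmod (x - y) = Cmod (y - x).
Proof. rewrite <- Cmod_opp; f_equal; ring. Qed.

Definition hat (A : C -> Prop) (x : Chat) : Prop :=
  match x with Some z => A z | None => False end.

Definition closed_C (A : C -> Prop) : Prop :=
  forall z, ~ A z -> exists e, 0 < e /\ forall w, Cmod (w - z) < e -> ~ A w.

Lemma disc_gauge_cover (B : R) (delta : C -> posreal) :
  exists l : list C, forall z, Cmod z <= B ->
    exists t, In t l /\ Cmod (z - t) < 2 * delta t.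
Proof.
  set (toC := fun t : Compactness.Tn 2 R => (fst t, fst (snd t)) : C).
  apply NNPP; intros Hno.
  apply (Compactness.compactness_list 2 (-B, (-B, tt)) (B, (B, tt)) (fun t => delta (toC t))).
  intros [l Hl]; apply Hno; exists (map toC l); intros z Hz.
  pose proof (Rmax_Cmod z) as Hcoord.
  pose proof (Rmax_l (Rabs (fst z)) (Rabs (snd z))); pose proof (Rmax_r (Rabs (fst z)) (Rabs (snd z))).
  destruct (Hl (fst z, (snd z, tt))) as [[t1 [t2 []]] [Ht [_ [H1 [H2 _]]]]].
  { split; [|split; [|exact Logic.I]]; apply Rabs_le_between; lra. }
  exists (toC (t1, (t2, tt))); split; [apply in_map; exact Ht|].
  apply Cmod_lt_of_coords; assumption.
Qed.

Lemma closed_bounded_compact (A : C -> Prop) (B : R) :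
  closed_C A -> (forall z, A z -> Cmod z <= B) -> compact_hat (hat A).
Proof.
  intros HA HAB I U HU Hcov.
  assert (Hgauge : forall t : C, exists p : posreal * option I,
    match snd p with
    | Some i => forall w, Cmod (w - t) < 2 * fst p -> U i (Some w)
    | None => forall w, Cmod (w - t) < 2 * fst p -> ~ A w
    end).
  { intros t; destruct (classic (A t)) as [At|nAt].
    - destruct (Hcov (Some t) At) as [i Hi].
      destruct (proj1 (HU i) t Hi) as [eps Heps].
      exists (pos_div_2 eps, Some i); simpl; intros w Hw; apply Heps.
      apply C_NormedModule_mixin_compat1; simpl in Hw.
      assert (Hwt : Cmod (w - t) < eps) by lra; exact Hwt.
    - destruct (HA t nAt) as [e [He HeA]].
      exists (pos_div_2 (mkposreal e He), None); simpl; intros w Hw; apply HeA.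
      simpl in Hw; lra. }
  destruct (choice _ Hgauge) as [gauge Hg].
  destruct (disc_gauge_cover B (fun t => fst (gauge t))) as [l Hl].
  exists (flat_map (fun t => match snd (gauge t) with Some i => i :: nil | None => nil end) l).
  intros [z|] Hz; [|contradiction].
  destruct (Hl z (HAB z Hz)) as [t [Hlt Hzt]].
  specialize (Hg t); destruct (snd (gauge t)) as [i|] eqn:Ei.
  - exists i; split; [|exact (Hg z Hzt)].
    apply in_flat_map; exists t; rewrite Ei; simpl; auto.
  - exfalso; exact (Hg z Hzt Hz).
Qed.

(* Cover by the complements of the closed discs of radius 1/(n+1) about z. *)
Lemma compact_hat_closed (L : Chat -> Prop) :
  compact_hat L -> closed_C (fun z => L (Some z)).
Proof.
  intros HL z Hz.
  set (U := fun (n : nat) (x : Chat) =>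
    match x with None => True | Some y => / INR (S n) < Cmod (y - z) end).
  destruct (HL nat U) as [l Hl].
  - intros n; split.
    + intros y Hy; unfold U in Hy; cbv beta iota in Hy.
      assert (Hgap : 0 < (Cmod (y - z) - / INR (S n)) / 2) by lra.
      exists (mkposreal _ Hgap); intros y' Hb; apply ball_Cmod in Hb; cbn [pos] in Hb.
      pose proof (Cmod_sub_le y y' z); rewrite (Cmod_sub_sym y y') in *; unfold U; cbv beta iota; lra.
    + intros _; exists (Cmod z + / INR (S n)); intros y Hy; unfold U; cbv beta iota.
      pose proof (Cmod_triangle (y - z) z) as Htri.
      replace (y - z + z)%C with y in Htri by ring; lra.
  - intros [y|] Hy; [|exists O; exact Logic.I].
    assert (Hyz : 0 < Cmod (y - z)).
    { apply Cmod_gt_0; intros E; apply Hz; rewrite <- (proj2 (Ceq_minus y z) E); exact Hy. }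
    destruct (archimed_cor1 _ Hyz) as [N [HN HN0]].
    exists (pred N); unfold U; cbv beta iota; replace (S (pred N)) with N by lia; exact HN.
  - set (N := list_max l).
    exists (/ INR (S N)); split; [apply Rinv_0_lt_compat, lt_0_INR; lia|].
    intros w Hw Lw; destruct (Hl _ Lw) as [i [Hi Hwi]]; unfold U in Hwi; cbv beta iota in Hwi.
    assert (HiN : (i <= N)%nat)
      by (apply (proj1 (Forall_forall _ l) (proj1 (list_max_le l N) (Nat.le_refl N))); exact Hi).
    assert (/ INR (S N) <= / INR (S i))
      by (apply Rinv_le_contravar; [apply lt_0_INR; lia | apply le_INR; lia]).
    lra.
Qed.

Definition restrC (g : Chat -> Chat) (z : C) : C :=
  match g (Some z) with Some w => w | None => RtoC 0 end.

Lemma in_G_Some c r g : in_G c r g -> forall z, g (Some z) = Some (restrC g z).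
Proof.
  induction 1 as [c' _|g h _ IHg _ IHh]; intros z; unfold restrC; simpl; [reflexivity|].
  rewrite IHh, IHg; reflexivity.
Qed.

Lemma restrC_comp c r g h z : in_G c r g -> in_G c r h ->
  restrC (fun w => g (h w)) z = restrC g (restrC h z).
Proof.
  intros Hg Hh; unfold restrC at 1; rewrite (in_G_Some _ _ _ Hh), (in_G_Some _ _ _ Hg); reflexivity.
Qed.

Lemma Csqr_continuous (z : C) (e : R) : 0 < e ->
  exists d, 0 < d /\ forall w, Cmod (w - z) < d -> Cmod (w * w - z * z) < e.
Proof.
  intros He; pose proof (Cmod_ge_0 z) as Hm; set (m := Cmod z) in *.
  exists (Rmin 1 (e / (2 * m + 1))); split; [apply Rmin_pos; [lra | apply Rdiv_lt_0_compat; lra]|].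
  intros w Hw; pose proof (Rmin_l 1 (e / (2 * m + 1))); pose proof (Rmin_r 1 (e / (2 * m + 1))).
  assert (Hsum : Cmod (w + z) <= 2 * m + 1).
  { replace (w + z)%C with ((w - z) + 2 * z)%C by ring.
    pose proof (Cmod_triangle (w - z) (2 * z)) as Htri.
    rewrite Cmod_mult, Cmod_R, Rabs_pos_eq in Htri by lra; fold m in Htri; lra. }
  replace (w * w - z * z)%C with ((w - z) * (w + z))%C by ring; rewrite Cmod_mult.
  assert (Hd : Rmin 1 (e / (2 * m + 1)) * (2 * m + 1) <= e).
  { apply Rle_trans with (e / (2 * m + 1) * (2 * m + 1)); [apply Rmult_le_compat_r; lra|].
    right; field; lra. }
  pose proof (Cmod_ge_0 (w - z)); pose proof (Cmod_ge_0 (w + z)); nra.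
Qed.

Lemma restrC_continuous c r g : in_G c r g -> forall z e, 0 < e ->
  exists d, 0 < d /\ forall w, Cmod (w - z) < d -> Cmod (restrC g w - restrC g z) < e.
Proof.
  induction 1 as [c' _|g h Hg IHg Hh IHh]; intros z e He.
  - destruct (Csqr_continuous z e He) as [d [Hd Hzd]]; exists d; split; [exact Hd|].
    intros w Hw; unfold restrC; simpl.
    replace (w * w + c' - (z * z + c'))%C with (w * w - z * z)%C by ring; auto.
  - destruct (IHg (restrC h z) e He) as [d1 [Hd1 Hg1]].
    destruct (IHh z d1 Hd1) as [d2 [Hd2 Hh2]].
    exists d2; split; [exact Hd2|]; intros w Hw.
    rewrite !(restrC_comp c r g h) by assumption; auto.
Qed.

Definition reaches (c : C) (r : R) (z w : C) : Prop :=
  z = w \/ exists g, in_G c r g /\ g (Some z) = Some w.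

Lemma reaches_step c r c' z w :
  Cmod (c' - c) <= r -> reaches c r (z * z + c') w -> reaches c r z w.
Proof.
  intros Hc [<-|[g [Hg Hgz]]]; right.
  - exists (fc c'); split; [constructor 1; exact Hc | reflexivity].
  - exists (fun x => g (fc c' x)); split; [|exact Hgz].
    constructor 2; [exact Hg | constructor 1; exact Hc].
Qed.

Lemma in_G_fc_center c r : 0 <= r -> in_G c r (fc c).
Proof. intros Hr; constructor 1; replace (c - c)%C with (RtoC 0) by ring; rewrite Cmod_0; exact Hr. Qed.

Section OrbitClosure.

Variables (c : C) (r : R) (K : C -> Prop) (B : R) (z0 : C).
Hypotheses (Hr : 0 <= r) (HK_closed : closed_C K) (HK_bounded : forall z, K z -> Cmod z <= B)
  (HK_invariant : forall g, in_G c r g -> forall z, K z -> K (restrC g z))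
  (HK_z0 : K z0) (HK_reaches : forall z, K z -> reaches c r z z0).

Definition orbit_closure (z : C) : Prop :=
  forall e, 0 < e -> exists g, in_G c r g /\ Cmod (restrC g z0 - z) < e.

Lemma orbit_closure_closed : closed_C orbit_closure.
Proof.
  intros z Hz; apply not_all_ex_not in Hz; destruct Hz as [e He].
  apply imply_to_and in He; destruct He as [He Hfar].
  exists (e / 2); split; [lra|]; intros w Hw Hmw; apply Hfar.
  destruct (Hmw (e / 2)) as [g [Hg Hgw]]; [lra|].
  exists g; split; [exact Hg|]; pose proof (Cmod_sub_le (restrC g z0) w z); lra.
Qed.

Lemma orbit_closure_sub z : orbit_closure z -> K z.
Proof.
  intros Hz; apply NNPP; intros HKz; destruct (HK_closed z HKz) as [e [He Hfar]].
  destruct (Hz e He) as [g [Hg Hgz]]; exact (Hfar _ Hgz (HK_invariant g Hg z0 HK_z0)).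
Qed.

Lemma orbit_closure_invariant g : in_G c r g ->
  forall z, orbit_closure z -> orbit_closure (restrC g z).
Proof.
  intros Hg z Hz e He; destruct (restrC_continuous c r g Hg z e He) as [d [Hd Hgd]].
  destruct (Hz d Hd) as [h [Hh Hhz]].
  exists (fun w => g (h w)); split; [constructor 2; assumption|].
  rewrite (restrC_comp c r g h) by assumption; auto.
Qed.

Lemma orbit_closure_invariant_compact : invariant_compact c r (hat orbit_closure).
Proof.
  split; [|split].
  - exists (Some (restrC (fc c) z0)); intros e He; exists (fc c).
    split; [exact (in_G_fc_center c r Hr)|].
    replace (restrC (fc c) z0 - restrC (fc c) z0)%C with (RtoC 0) by ring; rewrite Cmod_0; exact He.
  - exact (closed_bounded_compact _ B orbit_closure_closed
      (fun z Hz => HK_bounded z (orbit_closure_sub z Hz))).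
  - intros g Hg [z|] Hz; [|contradiction].
    rewrite (in_G_Some c r g Hg); exact (orbit_closure_invariant g Hg z Hz).
Qed.

(* Every point of the orbit closure reaches z0, so any invariant compact
   subset contains z0, hence its orbit, hence (being closed) its closure. *)
Lemma has_planar_minimal_set_of_reaching : has_planar_minimal_set c r.
Proof.
  exists (hat orbit_closure); split; [|intros []].
  split; [exact orbit_closure_invariant_compact|].
  intros L' [[x0 Lx0] [HL'_compact HL'_invariant]] HL'_sub [z|] Hz; [|contradiction].
  destruct x0 as [w|]; [|destruct (HL'_sub _ Lx0)].
  assert (L'z0 : L' (Some z0)).
  { destruct (HK_reaches w (orbit_closure_sub w (HL'_sub _ Lx0))) as [<-|[g [Hg Hgw]]];
      [exact Lx0 | rewrite <- Hgw; exact (HL'_invariant g Hg _ Lx0)]. }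
  apply NNPP; intros HL'z.
  destruct (compact_hat_closed L' HL'_compact z HL'z) as [e [He Hfar]].
  destruct (Hz e He) as [h [Hh Hhz]]; apply (Hfar _ Hhz).
  rewrite <- (in_G_Some c r h Hh); exact (HL'_invariant h Hh _ L'z0).
Qed.

End OrbitClosure.

(* F(s) = s^4 + (2 - 2r) s^2 - s + r^2 - r is convex for r <= 1, F(0) = r^2 - r <= 0,
   and the hypothesis on a gives F(a) = -4r(a^2 + 1) < 0. *)
Lemma quartic_descent (a r s : R) : 0 < r <= 1 -> 0 <= s <= a ->
  r + 2 * (a * a + r) + (a * a + r) ^ 2 = a ->
  (s * s - r) ^ 2 + 2 * (s * s - r) - r <= s - 2 * r.
Proof.
  intros [Hr0 Hr1] [Hs0 Hsa] Ha.
  set (F := fun x => x ^ 4 + (2 - 2 * r) * x ^ 2 - x + (r * r - r)).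
  assert (F0 : F 0 <= 0) by (unfold F; nra).
  assert (Fa : F a <= 0) by (unfold F; nra).
  assert (Hchord : a * F s = (a - s) * F 0 + s * F a
    - s * (a - s) * (a * (a * a + a * s + s * s) + (2 - 2 * r) * a)) by (unfold F; ring).
  assert (Hcurv : 0 <= s * (a - s) * (a * (a * a + a * s + s * s) + (2 - 2 * r) * a))
    by (apply Rmult_le_pos; nra).
  assert (HFs : F s <= 0).
  { destruct (Req_dec a 0) as [Ha0|Ha0].
    - replace s with 0 by lra; exact F0.
    - assert (a * F s <= 0) by nra; nra. }
  unfold F in HFs; nra.
Qed.

Lemma Cmod_sqr_sub_double (v : C) : Cmod (v * v - 2 * v) <= Cmod v * Cmod v + 2 * Cmod v.
Proof.
  replace (v * v - 2 * v)%C with (v * v + - (2 * v))%C by ring.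
  eapply Rle_trans; [apply Cmod_triangle|].
  rewrite Cmod_opp, !Cmod_mult, Cmod_R, Rabs_pos_eq by lra; lra.
Qed.

Lemma exists_shift_toward_0 (r : R) (X : C) : 0 <= r ->
  exists e : C, Cmod e <= r /\ Cmod (X + e) <= Rmax 0 (Cmod X - r).
Proof.
  intros Hr; destruct (Rle_dec (Cmod X) r) as [Hle|Hgt].
  - exists (- X)%C; rewrite Cmod_opp; split; [exact Hle|].
    replace (X + - X)%C with (RtoC 0) by ring; rewrite Cmod_0; apply Rmax_l.
  - set (m := Cmod X) in *; assert (Hm : 0 < m) by lra.
    exists (RtoC (- (r / m)) * X)%C; split.
    + rewrite Cmod_mult, Cmod_R, Rabs_Ropp, Rabs_pos_eq by (apply Rdiv_le_0_compat; lra).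
      fold m; right; field; lra.
    + assert (Hrm : r / m <= 1) by (apply (Rdiv_le_1 r m Hm); lra).
      replace (X + RtoC (- (r / m)) * X)%C with (RtoC (1 - r / m) * X)%C
        by (rewrite RtoC_opp, RtoC_minus; ring).
      rewrite Cmod_mult, Cmod_R, Rabs_pos_eq by lra; fold m.
      replace ((1 - r / m) * m) with (m - r) by (field; lra); apply Rmax_r.
Qed.

Lemma exists_param_toward (c : C) (r : R) (z p : C) : 0 <= r ->
  exists c', Cmod (c' - c) <= r /\ Cmod (z * z + c' - p) <= Rmax 0 (Cmod (z * z + c - p) - r).
Proof.
  intros Hr; destruct (exists_shift_toward_0 r (z * z + c - p) Hr) as [e [He HXe]].
  exists (c + e)%C; split.
  - replace (c + e - c)%C with e by ring; exact He.
  - replace (z * z + (c + e) - p)%C with (z * z + c - p + e)%C by ring; exact HXe.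
Qed.

Section MinusOne.

Variables (a r : R).
Hypotheses (Hr : 0 < r <= 1) (Ha : 0 <= a)
  (Hroot : r + 2 * (a * a + r) + (a * a + r) ^ 2 = a).

Definition two_discs (z : C) : Prop := Cmod z <= a \/ Cmod (z + 1) <= a * a + r.

Lemma two_discs_closed : closed_C two_discs.
Proof.
  intros z Hz; apply not_or_and in Hz; destruct Hz as [H0 H1].
  apply Rnot_le_lt in H0; apply Rnot_le_lt in H1.
  pose proof (Rmin_l (Cmod z - a) (Cmod (z + 1) - (a * a + r))).
  pose proof (Rmin_r (Cmod z - a) (Cmod (z + 1) - (a * a + r))).
  exists (Rmin (Cmod z - a) (Cmod (z + 1) - (a * a + r))); split; [apply Rmin_pos; lra|].
  intros w Hw [Hw0|Hw1].
  - pose proof (Cmod_triangle (z - w) w) as Htri; replace (z - w + w)%C with z in Htri by ring.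
    rewrite Cmod_sub_sym in Htri; lra.
  - pose proof (Cmod_triangle (z - w) (w + 1)) as Htri.
    replace (z - w + (w + 1))%C with (z + 1)%C in Htri by ring.
    rewrite Cmod_sub_sym in Htri; lra.
Qed.

Lemma two_discs_bounded z : two_discs z -> Cmod z <= a + 1 + (a * a + r).
Proof.
  intros [Hz|Hz]; [nra|].
  pose proof (Cmod_triangle (z + 1) (RtoC (-1))) as Htri.
  replace (z + 1 + RtoC (-1))%C with z in Htri by ring.
  rewrite Cmod_R, Rabs_left in Htri by lra; lra.
Qed.

(* From the second disc: z^2 + c' = v^2 - 2v + (c' + 1) with v = z + 1, of modulus at most
   b^2 + 2b + r = a for b = a^2 + r. *)
Lemma two_discs_step c' z : Cmod (c' - RtoC (-1)) <= r -> two_discs z -> two_discs (z * z + c').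
Proof.
  intros Hc [Hz|Hz]; pose proof (Cmod_ge_0 z).
  - right; replace (z * z + c' + 1)%C with (z * z + (c' - RtoC (-1)))%C by ring.
    eapply Rle_trans; [apply Cmod_triangle|]; rewrite Cmod_mult; nra.
  - left; replace (z * z + c')%C with (((z + 1) * (z + 1) - 2 * (z + 1)) + (c' - RtoC (-1)))%C
      by ring.
    eapply Rle_trans; [apply Cmod_triangle|].
    pose proof (Cmod_sqr_sub_double (z + 1)); pose proof (Cmod_ge_0 (z + 1)); nra.
Qed.

Lemma two_discs_invariant g :
  in_G (RtoC (-1)) r g -> forall z, two_discs z -> two_discs (restrC g z).
Proof.
  induction 1 as [c' Hc|g h Hg IHg Hh IHh]; intros z Hz.
  - exact (two_discs_step c' z Hc Hz).
  - rewrite (restrC_comp (RtoC (-1)) r g h) by assumption; auto.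
Qed.

Lemma two_step_radius s p : 0 <= s <= a -> 0 <= p <= Rmax 0 (s * s - r) ->
  Rmax 0 (p * p + 2 * p - r) <= Rmax 0 (s - 2 * r).
Proof.
  intros Hs Hp; destruct (Rle_dec (s * s) r) as [Hsr|Hsr].
  - rewrite Rmax_left in Hp by lra; replace p with 0 by lra.
    rewrite Rmax_left by lra; apply Rmax_l.
  - rewrite Rmax_right in Hp by lra; apply Rle_max_compat_l.
    pose proof (quartic_descent a r s Hr Hs Hroot); nra.
Qed.

(* The first parameter pulls z^2 towards -1, the second pulls the next image towards 0. *)
Lemma disc_two_steps z : Cmod z <= a ->
  exists w, Cmod w <= Rmax 0 (Cmod z - 2 * r) /\
    (reaches (RtoC (-1)) r w (RtoC 0) -> reaches (RtoC (-1)) r z (RtoC 0)).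
Proof.
  intros Hz; assert (Hr0 : 0 <= r) by lra.
  destruct (exists_param_toward (RtoC (-1)) r z (RtoC (-1)) Hr0) as [c1 [Hc1 Hu]].
  replace (z * z + RtoC (-1) - RtoC (-1))%C with (z * z)%C in Hu by ring.
  rewrite Cmod_mult in Hu; set (u := (z * z + c1)%C) in *.
  destruct (exists_param_toward (RtoC (-1)) r u (RtoC 0) Hr0) as [c2 [Hc2 Hw]].
  replace (u * u + RtoC (-1) - RtoC 0)%C with ((u + 1) * (u + 1) - 2 * (u + 1))%C in Hw by ring.
  replace (u * u + c2 - RtoC 0)%C with (u * u + c2)%C in Hw by ring.
  replace (u - RtoC (-1))%C with (u + 1)%C in Hu by ring.
  exists (u * u + c2)%C; split.
  - eapply Rle_trans; [exact Hw|]; eapply Rle_trans; [|apply (two_step_radius (Cmod z) (Cmod (u + 1)))].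
    + apply Rle_max_compat_l; pose proof (Cmod_sqr_sub_double (u + 1)); lra.
    + split; [apply Cmod_ge_0 | exact Hz].
    + split; [apply Cmod_ge_0 | exact Hu].
  - intros Hreach; apply (reaches_step _ _ c1 z _ Hc1), (reaches_step _ _ c2 u _ Hc2), Hreach.
Qed.

Lemma disc_reaches_0_within n : forall z, Cmod z <= a -> Cmod z <= 2 * r * INR n ->
  reaches (RtoC (-1)) r z (RtoC 0).
Proof.
  induction n as [|n IH]; intros z Hz Hn.
  - left; apply Cmod_eq_0; simpl in Hn; pose proof (Cmod_ge_0 z); lra.
  - destruct (disc_two_steps z Hz) as [w [Hw Hwz]]; apply Hwz, IH.
    + eapply Rle_trans; [exact Hw|]; apply Rmax_lub; lra.
    + eapply Rle_trans; [exact Hw|]; rewrite S_INR in Hn; pose proof (pos_INR n).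
      apply Rmax_lub; nra.
Qed.

Lemma two_discs_reach_0 z : two_discs z -> reaches (RtoC (-1)) r z (RtoC 0).
Proof.
  assert (Hdisc : forall w, Cmod w <= a -> reaches (RtoC (-1)) r w (RtoC 0)).
  { intros w Hw; destruct (INR_archimed (2 * r) (Cmod w)) as [n Hn]; [lra|].
    apply (disc_reaches_0_within n); lra. }
  intros [Hz|Hz]; [exact (Hdisc z Hz)|].
  destruct (exists_param_toward (RtoC (-1)) r z (RtoC 0) (Rlt_le _ _ (proj1 Hr))) as [c' [Hc Hw]].
  replace (z * z + RtoC (-1) - RtoC 0)%C with ((z + 1) * (z + 1) - 2 * (z + 1))%C in Hw by ring.
  replace (z * z + c' - RtoC 0)%C with (z * z + c')%C in Hw by ring.
  apply (reaches_step _ _ c' z _ Hc), Hdisc.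
  eapply Rle_trans; [exact Hw|]; apply Rmax_lub; [exact Ha|].
  pose proof (Cmod_sqr_sub_double (z + 1)); pose proof (Cmod_ge_0 (z + 1)); nra.
Qed.

Lemma has_planar_minimal_set_minus_one : has_planar_minimal_set (RtoC (-1)) r.
Proof.
  apply (has_planar_minimal_set_of_reaching (RtoC (-1)) r two_discs (a + 1 + (a * a + r)) (RtoC 0)).
  - lra.
  - exact two_discs_closed.
  - exact two_discs_bounded.
  - exact two_discs_invariant.
  - left; rewrite Cmod_0; exact Ha.
  - exact two_discs_reach_0.
Qed.

End MinusOne.

Lemma r_bif_ge c r : 0 <= r -> has_planar_minimal_set c r -> Rbar_le r (r_bif c).
Proof. intros Hr Hpms; apply (proj1 (Lub_Rbar_correct _)); split; assumption. Qed.

Lemma rho_root d : rho d + 2 * (d * d + rho d) + (d * d + rho d) ^ 2 = d.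
Proof.
  unfold rho; set (S := sqrt (4 * d ^ 2 + 4 * d + 9)).
  assert (HS : S * S = 4 * d ^ 2 + 4 * d + 9) by (apply sqrt_sqrt; nra).
  nra.
Qed.

Lemma rho_le_1 d : 0 <= d -> rho d <= 1.
Proof.
  intros Hd; unfold rho; pose proof (sqrt_pos (4 * d ^ 2 + 4 * d + 9)).
  set (S := sqrt (4 * d ^ 2 + 4 * d + 9)) in *.
  assert (HS : S * S = 4 * d ^ 2 + 4 * d + 9) by (apply sqrt_sqrt; nra).
  assert (HST : S * S <= (2 * d ^ 2 + 5) * (2 * d ^ 2 + 5)) by nra.
  assert (S <= 2 * d ^ 2 + 5) by (apply Rsqr_incr_0_var; unfold Rsqr; nra).
  lra.
Qed.

Lemma rho_one_tenth_pos : 0 < rho (1 / 10).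
Proof.
  unfold rho; pose proof (sqrt_pos (4 * (1 / 10) ^ 2 + 4 * (1 / 10) + 9)).
  set (S := sqrt (4 * (1 / 10) ^ 2 + 4 * (1 / 10) + 9)) in *.
  assert (HS : S * S = 4 * (1 / 10) ^ 2 + 4 * (1 / 10) + 9) by (apply sqrt_sqrt; nra).
  nra.
Qed.

Lemma rho_continuous d : continuity_pt rho d.
Proof.
  apply continuity_pt_filterlim, (ex_derive_continuous (V := R_NormedModule)).
  unfold rho; auto_derive; nra.
Qed.

Lemma rho_le_r_bif_minus_one d : 0 <= d -> 0 < rho d -> Rbar_le (rho d) (r_bif (RtoC (-1))).
Proof.
  intros Hd Hrho; apply r_bif_ge; [lra|].
  apply (has_planar_minimal_set_minus_one d (rho d)); [split; [exact Hrho | exact (rho_le_1 d Hd)] | exact Hd |].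
  pose proof (rho_root d); nra.
Qed.

Theorem theorem4p18 :
  forall dmax : R, 0 < dmax -> dmax ^ 3 + 2 * dmax - 1 = 0 ->
  exists d0 : R, 0 <= d0 <= dmax /\
    (forall d : R, 0 <= d <= dmax -> rho d <= rho d0) /\
    Rbar_le (Finite (rho d0)) (r_bif (RtoC (-1))).
Proof.
  intros dmax Hdmax Hcubic.
  destruct (continuity_ab_maj rho 0 dmax) as [d0 [Hmax Hd0]];
    [lra | intros d _; apply rho_continuous |].
  exists d0; split; [exact Hd0|]; split; [exact Hmax|].
  assert (Hdmax_ge : 1 / 10 <= dmax) by nra.
  apply rho_le_r_bif_minus_one; [lra|].
  pose proof (Hmax (1 / 10) ltac:(lra)); pose proof rho_one_tenth_pos; lra.
Qed.
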